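(* Let $C$ be a closed cone with nonempty interior $\operatorname{int} C$ in a real Banach space $X$, and let $f:\operatorname{int} C \to \operatorname{int} C$ be subhomogeneous and type K order-preserving. Suppose that $f$ has a fixed point in $\operatorname{int} C$ and that, for some $x \in \operatorname{int} C$, the norm closure of the orbit $\mathcal{O}(x,f) = \{f^k(x) : k \in \mathbb{N}\}$ is compact. Then the sequence $f^k(x)$ converges (in norm) to a fixed point of $f$.
   Context: A closed cone is a closed convex set $C \subset X$ with $\lambda C \subset C$ for all $\lambda \ge 0$ and $C \cap (-C) = \{0\}$. It induces the partial order $x \le y$ iff $y - x \in C$. A map $f$ on a domain $D\subseteq X$ is order-preserving if $x \le y$ implies $f(x) \le f(y)$; it is subhomogeneous if $f(tx) \le t f(x)$ for all $t \ge 1$ and $x \in D$. A map $f: D \to X$ is type K order-preserving if for any $x, y \in D$ with $x \le y$ there exists $\epsilon > 0$ such that $f(y) - f(x) \ge \epsilon (y - x)$. *)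

From HB Require Import structures.
From mathcomp Require Import all_boot all_order all_algebra.
From mathcomp Require Import all_classical all_reals all_analysis.
Set Implicit Arguments. Unset Strict Implicit. Unset Printing Implicit Defensive.
Import Order.TTheory GRing.Theory Num.Theory.
Import numFieldNormedType.Exports.
Local Open Scope classical_set_scope.
Local Open Scope ring_scope.

Section Cones.
Context {R : realType} {X : normedModType R}.

Definition closed_cone (C : set X) : Prop :=
  [/\ closed C,
      (forall x y (t : R), C x -> C y -> 0 <= t -> t <= 1 -> C (t *: x + (1 - t) *: y)),
      (forall (l : R) x, 0 <= l -> C x -> C (l *: x)) &
      (forall x, C x -> C (- x) -> x = 0)].

Definition cle (C : set X) (x y : X) : Prop := C (y - x).

Definition subhomogeneous (C D : set X) (f : X -> X) : Prop :=
  forall (t : R) x, 1 <= t -> D x -> cle C (f (t *: x)) (t *: f x).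

Definition typeK_order_preserving (C D : set X) (f : X -> X) : Prop :=
  forall x y, D x -> D y -> cle C x y ->
    exists eps : R, 0 < eps /\ cle C (eps *: (y - x)) (f y - f x).

End Cones.

From HB Require Import structures.
From mathcomp Require Import all_boot all_order all_algebra.
From mathcomp Require Import all_classical all_reals all_analysis.
From mathcomp Require Import lra.
Import Order.TTheory GRing.Theory Num.Theory.
Import numFieldNormedType.Exports.
Local Open Scope classical_set_scope.
Local Open Scope ring_scope.

(* The fixed point p bounds the orbit of x in Thompson's metric, so the orbit lies in an
   order interval [p / A, A p] and has a cluster point y in the interior of C.  To see that
   y is fixed, compare the orbits of x and f x: since f is order-preserving and
   subhomogeneous, max (1, M(f^n x / f^(n+1) x)) decreases to some sigma, and along a
   subsequence (f^n x, f^(n+1) x) approaches (y, f y); hence f^j y <= sigma f^(j+1) y for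
   all j, and sigma is optimal in each of these inequalities.  If sigma > 1, the gaps
   sigma f^(j+1) y - f^j y lie in C, each dominates a positive multiple of the previous one
   by the type K property, hence of the sum of all earlier ones, and this sum telescopes to (sigma - 1) times a sum of iterates
   plus a bounded term, so it eventually dominates p.  This improves one of the optimal
   inequalities, a contradiction; so y <= f y, and symmetrically f y <= y.  Finally, once
   an iterate of x is close to the fixed point y, all later ones are, so y is the only
   cluster point of the orbit and compactness gives convergence. *)

Set Implicit Arguments. Unset Strict Implicit.

Section ClosedCone.
Context {R : realType} {X : normedModType R} (C : set X).
Hypothesis hC : closed_cone C.

Lemma cone_scale (l : R) x : 0 <= l -> C x -> C (l *: x).
Proof. by case: hC => _ _ h _; apply: h. Qed.

Lemma cone_add x y : C x -> C y -> C (x + y).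
Proof.
case: hC => _ convC _ _ Cx Cy.
have : C (2 *: (2^-1 *: x + (1 - 2^-1) *: y)).
  by apply: cone_scale => //; apply: convC => //; lra.
have half : 2 * 2^-1 = 1 :> R by lra.
have half' : 2 * (1 - 2^-1) = 1 :> R by lra.
by rewrite scalerDr !scalerA half half' !scale1r.
Qed.

Lemma cone0 x : C x -> C 0.
Proof. by move=> /(cone_scale (lexx 0)); rewrite scale0r. Qed.

Lemma cone_closed_lim v w : (forall e : R, 0 < e -> C (v + e *: w)) -> C v.
Proof.
case: hC => closedC _ _ _ h; apply: closedC => B /nbhs_normP [r r0 rB].
pose e := r / (`|w| + 1).
have e0 : 0 < e by rewrite divr_gt0 // ltr_pwDr.
exists (v + e *: w); split; first exact: h.
apply: rB; rewrite /ball_ /= opprD addrA subrr sub0r normrN normrZ gtr0_norm //.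
by rewrite /e mulrAC ltr_pdivrMr ?ltr_pwDr // ltr_pM2l // ltrDl.
Qed.

Lemma cle_trans x y z : cle C x y -> cle C y z -> cle C x z.
Proof. by rewrite /cle => Cxy Cyz; have := cone_add Cyz Cxy; rewrite addrA subrK. Qed.

Lemma cle_add x y z t : cle C x y -> cle C z t -> cle C (x + z) (y + t).
Proof. by rewrite /cle => Cxy Czt; have := cone_add Cxy Czt; rewrite opprD addrACA. Qed.

Lemma cle_scale (l : R) x y : 0 <= l -> cle C x y -> cle C (l *: x) (l *: y).
Proof. by rewrite /cle -scalerBr; apply: cone_scale. Qed.

Lemma cle_scalel (l m : R) x : l <= m -> C x -> cle C (l *: x) (m *: x).
Proof. by move=> lm Cx; rewrite /cle -scalerBl; apply: cone_scale; rewrite ?subr_ge0. Qed.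

Lemma cle_anti x y : cle C x y -> cle C y x -> x = y.
Proof.
case: hC => _ _ _ pointed; rewrite /cle => Cxy Cyx; apply/eqP.
by rewrite eq_sym -subr_eq0; apply/eqP/pointed; rewrite ?opprB.
Qed.

Lemma interior_scaled_ball y : interior C y -> exists2 r : R, 0 < r &
  forall (d : R) z, 0 < d -> `|z| < d * r -> C (d *: y + z).
Proof.
move=> /nbhs_normP [r r0 ballC]; exists r => // d z d0 zr.
have -> : d *: y + z = d *: (y + d^-1 *: z).
  by rewrite scalerDr scalerA mulfV ?gt_eqF // scale1r.
apply/cone_scale/ballC; first exact: ltW.
rewrite /ball_ /= opprD addrA subrr sub0r normrN normrZ gtr0_norm ?invr_gt0 //.
by rewrite mulrC ltr_pdivrMr // mulrC.
Qed.

Lemma interior_scale (t : R) y : 0 < t -> interior C y -> interior C (t *: y).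
Proof.
move=> t0 /interior_scaled_ball [r r0 ballC]; rewrite /interior; apply/nbhs_normP.
exists (t * r); first exact: mulr_gt0.
move=> z /= tyz; have -> : z = t *: y + (z - t *: y) by rewrite addrC subrK.
by apply: ballC => //; rewrite -normrN opprB.
Qed.

Lemma interior_add y x : interior C y -> C x -> interior C (y + x).
Proof.
move=> /nbhs_normP [r r0 ballC] Cx; rewrite /interior; apply/nbhs_normP; exists r => // z /= yxz.
have -> : z = (z - x) + x by rewrite subrK.
by apply: cone_add Cx; apply: ballC; rewrite /ball_ /= opprB addrA.
Qed.

Lemma cle_interior_scale p z : interior C p -> exists2 l : R, 0 < l & cle C z (l *: p).
Proof.
move=> /interior_scaled_ball [r r0 ballC].
have l0 : 0 < 2 * (`|z| + 1) / r by rewrite divr_gt0 // mulr_gt0 // ltr_pwDr.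
exists (2 * (`|z| + 1) / r) => //; apply: ballC => //.
by rewrite normrN divfK ?gt_eqF //; have := normr_ge0 z; lra.
Qed.

End ClosedCone.

(* [order_close C c u v] says that the Thompson distance of [u] and [v] is at most [ln c]. *)
Definition order_close {R : realType} {X : normedModType R} (C : set X) (c : R) (u v : X) :=
  cle C u (c *: v) /\ cle C v (c *: u).

Section OrderClose.
Context {R : realType} {X : normedModType R} (C : set X).
Hypothesis hC : closed_cone C.

Lemma order_closeC (c : R) u v : order_close C c u v -> order_close C c v u.
Proof. by case. Qed.

Lemma exists_order_close u v : interior C u -> interior C v ->
  exists2 A : R, 1 <= A & order_close C A u v.
Proof.
move=> iu iv; have [a a0 uav] := cle_interior_scale hC u iv.
have [b b0 vbu] := cle_interior_scale hC v iu.
exists (Order.max 1 (Order.max a b)); first by rewrite le_max lexx.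
split.
- apply: (cle_trans hC uav); apply: (cle_scalel hC _ (interior_subset iv)).
  by rewrite !le_max lexx orbT.
- apply: (cle_trans hC vbu); apply: (cle_scalel hC _ (interior_subset iu)).
  by rewrite !le_max lexx !orbT.
Qed.

Lemma order_close_transfer (c b : R) u u' v v' : 0 <= c -> 0 <= b ->
  order_close C c u u' -> order_close C c v v' -> cle C u (b *: v) ->
  cle C u' ((c * c * b) *: v').
Proof.
move=> c0 b0 [_ u'u] [vv' _] ubv; apply: (cle_trans hC u'u).
rewrite mulrAC -!scalerA; apply: (cle_scale hC c0).
exact: (cle_trans hC ubv (cle_scale hC b0 vv')).
Qed.

Lemma interior_order_close (A : R) p y : interior C p -> 0 < A -> cle C p (A *: y) ->
  interior C y.
Proof.
move=> ip A0 pAy; have : interior C (A^-1 *: (p + (A *: y - p))).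
  by apply: (interior_scale hC); rewrite ?invr_gt0 //; apply: (interior_add hC).
by rewrite addrC subrK scalerA mulVf ?gt_eqF // scale1r.
Qed.

Lemma order_close_nbhs (c : R) y : 1 < c -> interior C y ->
  \forall z \near y, order_close C c z y.
Proof.
move=> c1 /(interior_scaled_ball hC) [r r0 ballC]; apply/nbhs_normP.
have c0 : 0 < c by lra.
exists ((c - 1) / c * r); first by rewrite /= mulr_gt0 // divr_gt0 // subr_gt0.
move=> z /= yz; have c10 : 0 < c - 1 by rewrite subr_gt0.
split; rewrite /cle.
- have -> : c *: y - z = (c - 1) *: y + (y - z) by rewrite scalerBl scale1r addrA subrK.
  apply: ballC => //; apply: lt_le_trans yz _; rewrite ler_pM2r // ler_pdivrMr //.
  by rewrite ler_peMr // ltW.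
- have -> : c *: z - y = (c - 1) *: y + c *: (z - y).
    by rewrite scalerBl scale1r scalerBr [RHS]addrC addrA subrK.
  apply: ballC => //; rewrite normrZ gtr0_norm // distrC.
  by rewrite -[(c - 1) * r](mulVKf (lt0r_neq0 c0)) ltr_pM2l // mulrA (mulrC c^-1).
Qed.

Lemma closed_order_close (c : R) y : closed [set z | order_close C c z y].
Proof.
have [closedC _ _ _] := hC.
have cont1 : continuous (fun z : X => c *: y - z).
  by move=> z; apply: cvgB; [exact: cvg_cst | exact: cvg_id].
have cont2 : continuous (fun z : X => c *: z - y).
  by move=> z; apply: cvgB; [apply: cvgZ; [exact: cvg_cst | exact: cvg_id] | exact: cvg_cst].
exact: closedI ((continuous_closedP _).1 cont1 _ closedC)
               ((continuous_closedP _).1 cont2 _ closedC).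
Qed.

Lemma order_close_eq u v : (forall c : R, 1 < c -> order_close C c u v) -> u = v.
Proof.
move=> close; apply: (cle_anti hC); rewrite /cle.
- apply: (cone_closed_lim hC (w := v)) => e e0.
  have [+ _] := close (1 + e) ltac:(lra).
  by rewrite /cle scalerDl scale1r addrAC.
- apply: (cone_closed_lim hC (w := u)) => e e0.
  have [_ +] := close (1 + e) ltac:(lra).
  by rewrite /cle scalerDl scale1r addrAC.
Qed.

End OrderClose.

Section OrderPreservingMap.
Context {R : realType} {X : normedModType R} (C : set X) (f : X -> X).
Hypothesis hC : closed_cone C.
Hypothesis f_interior : forall y, interior C y -> interior C (f y).
Hypothesis f_subhom : subhomogeneous C (interior C) f.
Hypothesis f_typeK : typeK_order_preserving C (interior C) f.

Lemma interior_iter n y : interior C y -> interior C (iter n f y).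
Proof. by move=> iy; elim: n => //= n; apply: f_interior. Qed.

Lemma cle_map u v : interior C u -> interior C v -> cle C u v -> cle C (f u) (f v).
Proof.
move=> iu iv uv; have [e [e0 step]] := f_typeK iu iv uv.
by have := cone_add hC step (cone_scale hC (ltW e0) uv); rewrite subrK.
Qed.

Lemma cle_map_scale (b : R) u v : 1 <= b -> interior C u -> interior C v ->
  cle C u (b *: v) -> cle C (f u) (b *: f v).
Proof.
move=> b1 iu iv ubv; have ibv : interior C (b *: v) by apply: (interior_scale hC) => //; lra.
exact: (cle_trans hC (cle_map iu ibv ubv) (f_subhom b1 iv)).
Qed.

Lemma cle_iter_scale (b : R) n u v : 1 <= b -> interior C u -> interior C v ->
  cle C u (b *: v) -> cle C (iter n f u) (b *: iter n f v).
Proof.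
move=> b1 iu iv ubv; elim: n => //= n IH.
by apply: cle_map_scale => //; apply: interior_iter.
Qed.

Lemma order_close_iter (c : R) n u v : 1 <= c -> interior C u -> interior C v ->
  order_close C c u v -> order_close C c (iter n f u) (iter n f v).
Proof. by move=> c1 iu iv [uv vu]; split; apply: cle_iter_scale. Qed.

Lemma typeK_gap (s : R) u v : 1 <= s -> interior C u -> interior C v -> cle C u (s *: v) ->
  exists2 e : R, 0 < e & cle C (e *: (s *: v - u)) (s *: f v - f u).
Proof.
move=> s1 iu iv usv; have isv : interior C (s *: v) by apply: (interior_scale hC) => //; lra.
have [e [e0 step]] := f_typeK iu isv usv; exists e => //; apply: (cle_trans hC step).
by have := f_subhom s1 iv; rewrite /cle opprB addrA subrK.
Qed.

End OrderPreservingMap.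

Lemma cone_chain_sum {R : realType} {X : normedModType R} (C : set X) (a : nat -> X) :
  closed_cone C -> (forall j, C (a j)) ->
  (forall j, exists2 e : R, 0 < e & cle C (e *: a j) (a j.+1)) ->
  forall N, exists2 c : R, 0 < c & cle C (c *: \sum_(j < N.+1) a j) (a N).
Proof.
move=> hC Ca step.
have Csum M : C (\sum_(j < M) a j).
  by apply: big_ind => //; [exact: (cone0 hC (Ca 0%N)) | exact: (cone_add hC)].
elim => [|N [c c0 IH]].
  by exists 1; rewrite // big_ord1 scale1r /cle subrr; exact: (cone0 hC (Ca 0%N)).
(* [a N.+1 >= e a N >= e c \sum_(j <= N) a j], so [2 a N.+1 >= m \sum_(j <= N.+1) a j]. *)
have [e e0 aN] := step N; pose m := Order.min (e * c) 1.
have m0 : 0 < m by rewrite lt_min mulr_gt0 // ltr01.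
exists (m / 2); first by rewrite divr_gt0.
have halves : 2^-1 + 2^-1 = 1 :> R by lra.
have -> : a N.+1 = 2^-1 *: a N.+1 + 2^-1 *: a N.+1 by rewrite -scalerDl halves scale1r.
rewrite big_ord_recr /= scalerDr.
apply: (cle_add hC).
- apply: (cle_trans hC (y := (2^-1 * e) *: (c *: \sum_(j < N.+1) a j))).
    rewrite scalerA; apply: (cle_scalel hC _ (Csum _)).
    by rewrite mulrC -mulrA ler_wpM2l ?invr_ge0 // ge_min lexx.
  rewrite -scalerA; apply: (cle_scale hC); first by rewrite invr_ge0.
  exact: (cle_trans hC (cle_scale hC (ltW e0) IH)).
- apply: (cle_scalel hC _ (Ca _)).
  by rewrite ler_pdivrMr // mulVf // ge_min lexx orbT.
Qed.

Lemma exists_sqr_factor {R : realType} (a b : R) : 0 < a -> a < b ->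
  exists2 c : R, 1 < c & c * c * a = b.
Proof.
move=> a0 ab; have ba1 : 1 < b / a by rewrite ltr_pdivlMr // mul1r.
have cc : Num.sqrt (b / a) * Num.sqrt (b / a) = b / a.
  by rewrite -expr2 sqr_sqrtr // ltW // (lt_trans ltr01).
exists (Num.sqrt (b / a)); last by rewrite cc divfK ?gt_eqF.
rewrite ltNge; apply/negP => s1.
have := mulr_ile1 (sqrtr_ge0 (b / a)) (sqrtr_ge0 (b / a)) s1 s1.
by rewrite cc leNgt ba1.
Qed.

Section OrbitComparison.
Context {R : realType} {X : normedModType R} (C : set X) (f : X -> X).
Hypothesis hC : closed_cone C.
Hypothesis f_interior : forall y, interior C y -> interior C (f y).
Hypothesis f_subhom : subhomogeneous C (interior C) f.
Hypothesis f_typeK : typeK_order_preserving C (interior C) f.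
Variables (p x1 x2 y1 y2 : X) (A : R).
Hypotheses (ip : interior C p) (ix1 : interior C x1) (ix2 : interior C x2).
Hypotheses (iy1 : interior C y1) (iy2 : interior C y2) (A0 : 0 < A).
Hypothesis y2_bounded : forall j, order_close C A (iter j f y2) p.
Hypothesis approx : forall (c : R) n0, 1 < c -> exists2 n, (n0 <= n)%N &
  order_close C c (iter n f x1) y1 /\ order_close C c (iter n f x2) y2.
Hypothesis sums_bounded : exists w, forall N,
  cle C w (\sum_(j < N) (iter j f y2 - iter j f y1)).

(* [sigma] is the limit of the nonincreasing sequence max(1, M(f^n x1 / f^n x2)),
   where M(u / v) = inf {b | u <= b v}. *)
Let ratios := [set b : R | 1 <= b /\ exists n, cle C (iter n f x1) (b *: iter n f x2)].
Let sigma := inf ratios.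

Let ratios_neq0 : ratios !=set0.
Proof.
by have [b b1 [x12 _]] := exists_order_close hC ix1 ix2; exists b; split => //; exists 0%N.
Qed.

Let ratios_lbound : has_lbound ratios.
Proof. by exists 1 => b []. Qed.

Lemma sigma_ge1 : 1 <= sigma.
Proof. by apply: lb_le_inf ratios_neq0 _ => b []. Qed.

Lemma sigma_le_ratio (b : R) n : 1 <= b ->
  cle C (iter n f x1) (b *: iter n f x2) -> sigma <= b.
Proof. by move=> b1 x12; apply: (ge_inf ratios_lbound); split => //; exists n. Qed.

Lemma ratio_gt_sigma (b : R) : sigma < b ->
  exists n0, forall n, (n0 <= n)%N -> cle C (iter n f x1) (b *: iter n f x2).
Proof.
move=> sb; have [b' [b'1 [n0 x12]] b'b] := inf_lt ratios_neq0 sb.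
exists n0 => n /subnKC <-; rewrite addnC !iterD.
have ix2' := interior_iter f_interior n0 ix2.
apply: (cle_trans hC (cle_iter_scale hC f_interior f_subhom f_typeK (n - n0) b'1
  (interior_iter f_interior n0 ix1) ix2' x12)).
exact: (cle_scalel hC (ltW b'b) (interior_subset (interior_iter f_interior _ ix2'))).
Qed.

Lemma orbit_cle_sigma j : cle C (iter j f y1) (sigma *: iter j f y2).
Proof.
suff y12 : cle C y1 (sigma *: y2).
  exact: (cle_iter_scale hC f_interior f_subhom f_typeK j sigma_ge1 iy1 iy2 y12).
rewrite /cle; apply: (cone_closed_lim hC (w := y2)) => e e0.
have s1 := sigma_ge1.
have [c c1 cE] := @exists_sqr_factor _ (sigma + e / 2) (sigma + e) ltac:(lra) ltac:(lra).
have [n0 x12] := @ratio_gt_sigma (sigma + e / 2) ltac:(lra).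
have [n n0n [close1 close2]] := approx n0 c1.
have b0 : 0 <= sigma + e / 2 by lra.
have := order_close_transfer hC (ltW (lt_trans ltr01 c1)) b0 close1 close2 (x12 n n0n).
by rewrite cE /cle scalerDl addrAC.
Qed.

Lemma sigma_le_orbit (t : R) j : 1 <= t ->
  cle C (iter j f y1) (t *: iter j f y2) -> sigma <= t.
Proof.
move=> t1 y12; apply/ler_addgt0Pr => e e0.
have [c c1 cE] := @exists_sqr_factor _ t (t + e) ltac:(lra) ltac:(lra).
have [n _ [close1 close2]] := approx 0 c1.
have c1' : 1 <= c by exact: ltW.
have close1j := order_close_iter hC f_interior f_subhom f_typeK j c1'
  (interior_iter f_interior n ix1) iy1 close1.
have close2j := order_close_iter hC f_interior f_subhom f_typeK j c1'
  (interior_iter f_interior n ix2) iy2 close2.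
apply: (@sigma_le_ratio _ (j + n)); first lra.
rewrite !iterD -cE.
exact: (order_close_transfer hC (ltW (lt_trans ltr01 c1)) (le_trans ler01 t1)
  (order_closeC close1j) (order_closeC close2j) y12).
Qed.

Lemma orbit_gap_sum_large : 1 < sigma ->
  exists N, cle C p (\sum_(j < N.+1) (sigma *: iter j f y2 - iter j f y1)).
Proof.
move=> s1; have [w sum_w] := sums_bounded.
have [L L0 wL] := cle_interior_scale hC (- w) ip.
have [N kN] : exists N : nat, (L + 1) * A / (sigma - 1) < N.+1%:R.
  by eexists; apply: truncnS_gt.
exists N.
have sum_y2 M : cle C ((M%:R / A) *: p) (\sum_(j < M) iter j f y2).
  elim: M => [|M IH].
    by rewrite big_ord0 mul0r scale0r /cle subrr; exact: (cone0 hC (interior_subset ip)).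
  rewrite big_ord_recr /= -addn1 natrD mulrDl scalerDl; apply: (cle_add hC IH).
  have [_ pA] := y2_bounded M.
  have Ainv : 0 <= A^-1 by rewrite invr_ge0 ltW.
  have := cle_scale hC Ainv pA.
  by rewrite scalerA mulVf ?gt_eqF // scale1r mul1r.
have -> : \sum_(j < N.+1) (sigma *: iter j f y2 - iter j f y1) =
    (sigma - 1) *: \sum_(j < N.+1) iter j f y2 +
    \sum_(j < N.+1) (iter j f y2 - iter j f y1).
  by rewrite sumrB -scaler_sumr sumrB scalerBl scale1r addrA subrK.
apply: (cle_trans hC (y := ((sigma - 1) * (N.+1%:R / A) - L) *: p)).
  rewrite -{1}[p]scale1r; apply: (cle_scalel hC _ (interior_subset ip)).
  rewrite lerBrDr mulrA ler_pdivlMr // addrC (mulrC (sigma - 1)).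
  by move: kN; rewrite ltr_pdivrMr ?subr_gt0 //; exact: ltW.
rewrite scalerBl; apply: (cle_add hC).
  by rewrite -scalerA; apply: (cle_scale hC _ (sum_y2 _)); rewrite subr_ge0 ltW.
by apply: (cle_trans hC _ (sum_w N.+1)); move: wL; rewrite /cle !opprK addrC.
Qed.

Lemma sigma_le1 : sigma <= 1.
Proof.
rewrite leNgt; apply/negP => s1.
pose a j := sigma *: iter j f y2 - iter j f y1.
have a_step j : exists2 e : R, 0 < e & cle C (e *: a j) (a j.+1).
  rewrite /a !iterS; apply: (typeK_gap hC f_subhom f_typeK (ltW s1));
    [exact: interior_iter | exact: interior_iter | exact: orbit_cle_sigma].
have [N pN] := orbit_gap_sum_large s1.
have [c c0 aN] := cone_chain_sum hC (fun j => orbit_cle_sigma j) a_step N.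
have cA0 : 0 < c / A by rewrite divr_gt0.
have y2N : cle C ((c / A) *: iter N f y2) (a N).
  apply: (cle_trans hC _ aN); apply: (cle_trans hC (y := c *: p)).
    have [y2A _] := y2_bounded N.
    by have := cle_scale hC (ltW cA0) y2A; rewrite scalerA divfK ?gt_eqF.
  exact: (cle_scale hC (ltW c0) pN).
have y1N : cle C (iter N f y1) ((sigma - c / A) *: iter N f y2).
  by move: y2N; rewrite /cle /a scalerBl addrAC.
pose t := Num.max 1 (sigma - c / A).
have t1 : 1 <= t by rewrite le_max lexx.
have : sigma <= t.
  apply: (sigma_le_orbit (j := N) t1); apply: (cle_trans hC y1N).
  apply: (cle_scalel hC _ (interior_subset (interior_iter f_interior N iy2))).
  by rewrite le_max lexx orbT.
by rewrite le_max => /orP []; lra.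
Qed.

Lemma cle_of_orbit_approx : cle C y1 y2.
Proof.
have sigma1 : sigma = 1 by apply/le_anti; rewrite sigma_le1 sigma_ge1.
by have := orbit_cle_sigma 0; rewrite sigma1 scale1r.
Qed.

End OrbitComparison.

Section ClusterPoints.
Context {T : topologicalType}.

Lemma cluster_closed (F : set_system T) (A : set T) : closed A -> F A -> cluster F `<=` A.
Proof. by move=> cA FA y; rewrite clusterE => /(_ A FA); rewrite -(closure_id A).1. Qed.

Lemma cluster_seq (u : nat -> T) q n0 U : cluster (u @ \oo) q -> nbhs q U ->
  exists2 n, (n0 <= n)%N & U (u n).
Proof.
move=> cl qU; have tail : (u @ \oo) (u @` [set n | (n0 <= n)%N]).
  by exists n0 => // n /= n0n; exists n.
by have [_ [[n n0n <-] Uun]] := cl _ _ tail qU; exists n.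
Qed.

(* Otherwise some neighbourhood [U] of [q] is frequently missed, and the trace of [F] on
   the complement of [U] has a cluster point in [K] that is not [q]. *)
Lemma compact_cluster_cvg (F : set_system T) {PF : ProperFilter F} (K : set T) q :
  compact K -> F K -> (forall q', cluster F q' -> q' = q) -> F --> q.
Proof.
move=> cK FK uniq U qU; apply: contrapT => nFU.
pose G := fun B : set T => F (U `|` B).
have GF : Filter G.
  constructor; rewrite /G.
  - by rewrite setUT; exact: filterT.
  - move=> B B' GB GB'; apply: filterS (filterI GB GB').
    by move=> y [[Uy|By] [Uy'|B'y]]; [left|left|left|right].
  - by move=> B B' BB' GB; apply: filterS GB => y [Uy|By]; [left|right; apply: BB'].
have GP : ProperFilter G by split; [rewrite /G setU0 | exact: GF].
have [q' [_ clq']] := cK G GP (filterS (@subsetUr _ U K) FK).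
have clF : cluster F q'.
  by move=> B V FB qV; apply: clq' qV; exact: filterS (@subsetUr _ U B) FB.
rewrite (uniq q' clF) in clq'.
have GnU : G (~` U) by rewrite /G setUCr; exact: filterT.
by have [y [nUy Uy]] := clq' _ _ GnU qU.
Qed.

End ClusterPoints.

Lemma sum_iter_telescope {V : zmodType} (f : V -> V) y N :
  \sum_(j < N) (iter j f (f y) - iter j f y) = iter N f y - y.
Proof.
rewrite (eq_bigr (fun j : 'I_N => iter j.+1 f y - iter j f y)) => [|j _]; last by rewrite iterSr.
by rewrite -(big_mkord xpredT (fun j => iter j.+1 f y - iter j f y)) telescope_sumr.
Qed.

Section OrbitLimits.
Context {R : realType} {X : normedModType R} (C : set X) (f : X -> X).
Hypothesis hC : closed_cone C.
Hypothesis f_interior : forall y, interior C y -> interior C (f y).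
Hypothesis f_subhom : subhomogeneous C (interior C) f.
Hypothesis f_typeK : typeK_order_preserving C (interior C) f.

Lemma order_close_orbit_fixed (c : R) n p z : f p = p -> 1 <= c ->
  interior C p -> interior C z -> order_close C c z p -> order_close C c (iter n f z) p.
Proof.
move=> fp c1 ip iz /(order_close_iter hC f_interior f_subhom f_typeK n c1 iz ip).
by rewrite (iter_fix n fp).
Qed.

Lemma cluster_order_close x y (c : R) n0 : 1 < c -> interior C y ->
  cluster ((fun n => iter n f x) @ \oo) y ->
  exists2 n, (n0 <= n)%N & order_close C c (iter n f x) y.
Proof. by move=> c1 iy cly; exact: (cluster_seq n0 cly (order_close_nbhs hC c1 iy)). Qed.

Lemma fixed_of_orbit_cluster (A : R) p x y : interior C p -> interior C x ->
  interior C y -> 0 < A -> (forall j, order_close C A (iter j f y) p) ->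
  cluster ((fun n => iter n f x) @ \oo) y -> f y = y.
Proof.
move=> ip ix iy A0 y_bounded cly.
have near_fy c n0 : 1 < c -> exists2 n, (n0 <= n)%N &
    order_close C c (iter n f x) y /\ order_close C c (iter n f (f x)) (f y).
  move=> c1; have [n n0n close_n] := cluster_order_close n0 c1 iy cly.
  exists n => //; split => //; rewrite -iterSr.
  exact: (order_close_iter hC f_interior f_subhom f_typeK 1 (ltW c1)
    (interior_iter f_interior n ix) iy close_n).
have ifx := f_interior ix; have ify := f_interior iy.
apply: (cle_anti hC).
- apply: (cle_of_orbit_approx hC f_interior f_subhom f_typeK ip ifx ix ify iy A0 y_bounded).
    by move=> c n0 c1; have [n n0n [? ?]] := near_fy c n0 c1; exists n.
  exists (- (A *: p)) => N.
  have -> : \sum_(j < N) (iter j f y - iter j f (f y)) = y - iter N f y.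
    rewrite -[RHS]opprB -sum_iter_telescope -sumrN.
    by apply: eq_bigr => j _; rewrite opprB.
  rewrite /cle opprK addrAC -addrA; apply: (cone_add hC (interior_subset iy)).
  by have [] := y_bounded N.
- apply: (cle_of_orbit_approx hC f_interior f_subhom f_typeK ip ix ifx iy ify A0) => //.
    by move=> j; rewrite -iterSr.
  exists (- y) => N; rewrite sum_iter_telescope /cle opprK subrK.
  exact: interior_subset (interior_iter f_interior N iy).
Qed.

Lemma orbit_cvg_fixed x y (K : set X) : interior C x -> interior C y -> f y = y ->
  compact K -> ((fun n => iter n f x) @ \oo) K ->
  cluster ((fun n => iter n f x) @ \oo) y -> (fun n => iter n f x) @ \oo --> y.
Proof.
move=> ix iy fy cK xK cly; apply: (compact_cluster_cvg cK xK) => q clq.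
apply: (order_close_eq hC) => c c1; have [n _ close_n] := cluster_order_close 0 c1 iy cly.
have x_close : ((fun n => iter n f x) @ \oo) [set z | order_close C c z y].
  exists n => // m /subnKC <- /=; rewrite addnC iterD.
  exact: (order_close_orbit_fixed (m - n) fy (ltW c1) iy (interior_iter f_interior n ix) close_n).
exact: (cluster_closed (closed_order_close (c := c) (y := y) hC) x_close clq).
Qed.

End OrbitLimits.

Unset Implicit Arguments. Set Strict Implicit.

Theorem mainTheorem1 (R : realType) (X : completeNormedModType R)
  (C : set X) (f : X -> X) (x : X) :
  closed_cone C ->
  (exists z, (interior C) z) ->
  (forall y, (interior C) y -> (interior C) (f y)) ->
  subhomogeneous C (interior C) f ->
  typeK_order_preserving C (interior C) f ->
  (exists p, (interior C) p /\ f p = p) ->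
  (interior C) x ->
  compact (closure (range (fun k : nat => iter k f x))) ->
  exists p, [/\ (interior C) p, f p = p &
                (fun k : nat => iter k f x) @ \oo --> p].
Proof.
move=> hC _ f_int f_sub f_K [p [ip fp]] ix cK; set xs := fun k : nat => iter k f x.
have close_p := order_close_orbit_fixed hC f_int f_sub f_K.
have [A A1 xA] := exists_order_close hC ix ip.
have xsK : (xs @ \oo) (closure (range xs)).
  by exists 0%N => // n _; apply: subset_closure; exists n.
have [y [_ cly]] := cK _ _ xsK.
have yA : order_close C A y p.
  have xsA : (xs @ \oo) [set z | order_close C A z p].
    by exists 0%N => // n _; exact: close_p.
  exact: (cluster_closed (closed_order_close (c := A) (y := p) hC) xsA cly).
have A0 : 0 < A by lra.
have iy : interior C y by case: yA => _ /(interior_order_close hC ip A0).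
have fy : f y = y.
  by apply: (fixed_of_orbit_cluster hC f_int f_sub f_K ip ix iy A0 _ cly) => j; exact: close_p.
by exists y; split => //; exact: (orbit_cvg_fixed hC f_int f_sub f_K ix iy fy cK xsK cly).
Qed.
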